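(* Let $T=(S,E)$ be a finite tree to which a unique self-loop has been added at one vertex, and consider simple random walk on it. Then its relaxation time satisfies \[ t_{\rm rel}\le \big(2\,\mathrm{diam}(T)+1\big)|E|. \]
   Context: $|E|$ counts the self-loop as one edge. Degrees count the self-loop twice; simple random walk moves from $v$ along a uniformly chosen edge-end at $v$, so it is irreducible, aperiodic and reversible with respect to $\pi(v)=\deg(v)/\sum_z\deg(z)$. If $1=\lambda_1>\lambda_2\ge\dots\ge\lambda_{|S|}>-1$ are the eigenvalues of its transition matrix, the absolute spectral gap is $\gamma_*=1-\max_{i\ge2}|\lambda_i|$ and the relaxation time is $t_{\rm rel}=1/\gamma_*$. $\mathrm{diam}(T)$ is the maximal graph distance between two vertices. *)

From HB Require Import structures.
From mathcomp Require Import all_boot all_order all_algebra.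
Set Implicit Arguments. Unset Strict Implicit. Unset Printing Implicit Defensive.
Import Order.TTheory GRing.Theory Num.Theory.
Local Open Scope ring_scope.

Section TreeDefs.
Variable n : nat.
Implicit Types (e : rel 'I_n) (o x y : 'I_n).

Definition simple_graph e := symmetric e /\ irreflexive e.

(* No simple cycle (of length >= 3). *)
Definition acyclic e :=
  forall (x : 'I_n) (p : seq 'I_n),
    path e x p -> uniq (x :: p) -> (2 <= size p)%N -> ~~ e (last x p) x.

Definition connected_graph e := forall x y, connect e x y.

Definition is_tree e := [/\ simple_graph e, connected_graph e & acyclic e].

Definition n_tree_edges e : nat :=
  #|[set pr : 'I_n * 'I_n | e pr.1 pr.2 && (pr.1 < pr.2)%N]|.

(* |E| for the tree with one self-loop added: the loop counts as one edge. *)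
Definition n_edges_loop e : nat := (n_tree_edges e).+1.

Fixpoint ball e k x : {set 'I_n} :=
  if k is k'.+1 then ball e k' x :|: [set z | [exists y in ball e k' x, e y z]]
  else [set x].

(* Graph distance (for a connected graph on n vertices it is < n). *)
Definition gdist e x y : nat := find (fun k => y \in ball e k x) (iota 0 n).

Definition diam e : nat := \max_(x : 'I_n) \max_(y : 'I_n) gdist e x y.

Definition deg_loop e o x : nat := #|[set y | e x y]| + (x == o) * 2.

(* Transition matrix of simple random walk on the tree plus a self-loop at o:
   moves along a uniformly chosen edge-end. *)
Definition srw_loop (R : realFieldType) e o : 'M[R]_n :=
  \matrix_(x, y) (((e x y)%:R + ((x == o) && (y == o))%:R * 2) / (deg_loop e o x)%:R).

End TreeDefs.

(* Absolute spectral gap, given the eigenvalues (with multiplicity) s: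
   1 - max_{i>=2} |lambda_i|, where one copy of the eigenvalue 1 is removed. *)
Definition abs_gap (R : realFieldType) (s : seq R) : R :=
  1 - \big[Num.max/0]_(x <- rem 1 s) `|x|.

Definition t_rel (R : realFieldType) (s : seq R) : R := (abs_gap s)^-1.

(* Let lam be an eigenvalue of the walk other than one copy of 1. Deflating the
   eigenvalue 1 along the constant right eigenvector gives a left eigenvector mu with
   sum mu = 0; put f = mu / deg. With K the edge-end count matrix (the loop counting
   twice) one has sum_{x,y} K x y (f x +- f y)^2 = 2 (1 +- lam) sum_x deg x f x^2.
   Joining each x to the loop vertex o by a path of length at most diam T and applying
   Cauchy-Schwarz along it bounds (f x - f o)^2 by diam (1 - lam) |f|^2, and f x^2 by
   (diam + 1/4) (1 + lam) |f|^2, the loop term 4 f(o)^2 taking care of the endpoint.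
   Summing against deg, of total mass 2|E| (and using sum deg f = 0 in the first case),
   gives 1 +- lam >= 1 / ((2 diam + 1) |E|). *)

From HB Require Import structures.
From mathcomp Require Import all_boot all_order all_algebra.
From mathcomp Require Import ring lra.
Import Order.TTheory GRing.Theory Num.Theory.
Set Implicit Arguments. Unset Strict Implicit. Unset Printing Implicit Defensive.

Section Graph.
Variables (n : nat) (e : rel 'I_n).

Lemma ball_path k x y : y \in ball e k x ->
  exists2 p, path e x p & last x p = y /\ size p <= k.
Proof.
elim: k y => [|k IHk] y /=; first by rewrite inE => /eqP ->; exists [::].
rewrite inE => /orP[/IHk [p Pp [Lp Sp]] | ]; first by exists p => //; split=> //; exact: leqW.
rewrite inE => /exists_inP [z /IHk [p Pp [Lp Sp]] ezy].
by exists (rcons p y); rewrite ?rcons_path ?Pp ?Lp ?last_rcons ?size_rcons.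
Qed.

Lemma path_ball x p : path e x p -> last x p \in ball e (size p) x.
Proof.
elim/last_ind: p => [|p z IHp] /=; first by rewrite inE.
rewrite rcons_path last_rcons size_rcons => /andP[/IHp Lp ez] /=.
by rewrite !inE; apply/orP; right; apply/exists_inP; exists (last x p).
Qed.

Lemma gdist_ball x y : connect e x y -> y \in ball e (gdist e x y) x.
Proof.
move=> /connectP [q Pq ->]; case: (shortenP Pq) => p Pp Up _.
have Hball : has (fun k => last x p \in ball e k x) (iota 0 n).
  apply/hasP; exists (size p); last exact: path_ball.
  rewrite mem_iota add0n /=; have := max_card (mem (x :: p)).
  by rewrite (card_uniqP Up) card_ord.
have := nth_find 0 Hball; rewrite /gdist nth_iota ?add0n //.
by move: Hball; rewrite has_find size_iota.
Qed.

Lemma short_uniq_path x y : connect e x y ->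
  exists p, [/\ path e x p, last x p = y, uniq (x :: p) & size p <= diam e].
Proof.
move=> /gdist_ball /ball_path [q Pq [Lq Sq]]; rewrite -Lq.
case: (shortenP Pq) => p Pp Up sub_pq.
have gdist_diam : gdist e x y <= diam e.
  by apply: leq_trans (leq_bigmax x); apply: leq_bigmax y.
exists p; split=> //; apply: leq_trans gdist_diam; apply: leq_trans Sq.
by apply: uniq_leq_size sub_pq; case/andP: Up.
Qed.

Lemma sum_adj_edges : symmetric e -> irreflexive e ->
  \sum_x \sum_y (e x y : nat) = 2 * n_tree_edges e.
Proof.
move=> e_sym e_irr.
have -> : n_tree_edges e = \sum_x \sum_y (e x y && (x < y)%N : nat).
  rewrite /n_tree_edges -sum1_card pair_big /= big_mkcond /=.
  by apply: eq_bigr => -[x y] _; rewrite inE /=; case: (_ && _).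
rewrite mul2n -addnn [X in _ + X]exchange_big -big_split /=.
apply: eq_bigr => x _; rewrite -big_split; apply: eq_bigr => y _ /=.
rewrite (e_sym y x); case exy: (e x y) => //=.
by case: (ltngtP x y) => // /val_inj xy; rewrite xy e_irr in exy.
Qed.

End Graph.

Local Open Scope ring_scope.

Definition path_sum (T : Type) (V : nmodType) (G : T -> T -> V) x p : V :=
  \sum_(ab <- zip (x :: p) p) G ab.1 ab.2.

Lemma path_sum_cons (T : Type) (V : nmodType) (G : T -> T -> V) x y p :
  path_sum G x (y :: p) = G x y + path_sum G y p.
Proof. by rewrite /path_sum /= big_cons. Qed.

Section PathSums.
Variables (R : realFieldType) (T : Type) (f : T -> R).

Lemma path_sum_ge0 (G : T -> T -> R) x p :
  (forall a b, 0 <= G a b) -> 0 <= path_sum G x p.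
Proof. by move=> G_ge0; apply: sumr_ge0. Qed.

Lemma sqrD_le_mulD (a b t S : R) : 0 <= t -> 0 <= S -> b ^+ 2 <= t * S ->
  (a + b) ^+ 2 <= (1 + t) * (a ^+ 2 + S).
Proof.
move=> t_ge0 S_ge0 bS; have [t0 | t_neq0] := eqVneq t 0.
  have b0 : b = 0 by apply/eqP; rewrite -sqrf_eq0 eq_le sqr_ge0 andbT -(mul0r S) -t0.
  by rewrite b0 t0 !addr0 mul1r lerDl.
have t_gt0 : 0 < t by rewrite lt_def t_neq0.
have := sqr_ge0 (t * a - b) => sq_ge0.
(* t * (rhs - lhs) = (t a - b)^2 + t (t S - b^2) *)
rewrite -subr_ge0 -(pmulr_rge0 _ t_gt0); nra.
Qed.

Lemma sqr_sub_le_path_sum x p :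
  (f x - f (last x p)) ^+ 2 <=
    (size p)%:R * path_sum (fun a b => (f a - f b) ^+ 2) x p.
Proof.
elim: p x => [|y p IHp] x /=; first by rewrite subrr expr0n mul0r.
rewrite path_sum_cons mulrS -(subrKA (f y)).
apply: sqrD_le_mulD (IHp y) => //; apply: path_sum_ge0 => *; exact: sqr_ge0.
Qed.

Lemma sqr_le_path_sum x p :
  f x ^+ 2 <= ((size p)%:R + 4^-1) *
    (path_sum (fun a b => (f a + f b) ^+ 2) x p + 4 * f (last x p) ^+ 2).
Proof.
elim: p x => [|y p IHp] x /=.
  by rewrite /path_sum big_nil !add0r mulrA mulVf ?mul1r ?pnatr_eq0.
rewrite path_sum_cons mulrS -addrA -addrA -{1}[f x](addrK (f y)).
apply: sqrD_le_mulD; first by rewrite addr_ge0 ?invr_ge0.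
  apply: addr_ge0; last by rewrite mulr_ge0 ?sqr_ge0.
  by apply: path_sum_ge0 => *; apply: sqr_ge0.
by rewrite sqrrN IHp.
Qed.

End PathSums.

Lemma sum_uniq_le (R : numDomainType) (T : finType) (h : T -> R) (s : seq T) :
  uniq s -> (forall a, 0 <= h a) -> \sum_(a <- s) h a <= \sum_a h a.
Proof.
move=> s_uniq h_ge0; rewrite big_uniq //= [leRHS](bigID (mem s)) /=.
by rewrite lerDl sumr_ge0.
Qed.

Section AdjacencySums.
Variables (R : realDomainType) (n : nat) (e : rel 'I_n) (G : 'I_n -> 'I_n -> R).
Hypotheses (e_sym : symmetric e) (G_sym : forall a b, G a b = G b a)
  (G_ge0 : forall a b, 0 <= G a b).

Local Notation F a b := ((e a b)%:R * G a b).

Let F_ge0 a b : 0 <= F a b.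
Proof. by rewrite mulr_ge0. Qed.

Lemma path_sum_le_adj_seq x p : path e x p ->
  2 * path_sum G x p <= \sum_(a <- x :: p) \sum_(b <- x :: p) F a b.
Proof.
elim: p x => [|y p IHp] x /=.
  by rewrite /path_sum big_nil mulr0 => _; rewrite !big_seq1 F_ge0.
case/andP => exy /IHp; set L := y :: p => IH.
have Fx_ge : G x y <= \sum_(b <- L) F x b.
  by rewrite /L big_cons exy mul1r lerDl sumr_ge0.
have F_x_ge : G x y <= \sum_(a <- L) F a x.
  by rewrite /L big_cons e_sym exy mul1r G_sym lerDl sumr_ge0.
rewrite big_cons big_cons [X in _ + X](eq_bigr (fun a => F a x + \sum_(b <- L) F a b)).
  by rewrite big_split /= path_sum_cons mulrDr; have := F_ge0 x x; lra.
by move=> a _; rewrite big_cons.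
Qed.

Lemma path_sum_le_adj x p : path e x p -> uniq (x :: p) ->
  2 * path_sum G x p <= \sum_a \sum_b F a b.
Proof.
move=> xp_path xp_uniq; apply: le_trans (path_sum_le_adj_seq xp_path) _.
apply: le_trans (sum_uniq_le xp_uniq _); last by move=> a; apply: sumr_ge0.
by apply: ler_sum => a _; apply: sum_uniq_le.
Qed.

End AdjacencySums.

Lemma mulr_ge1_le (R : realDomainType) (a K x : R) :
  0 <= a <= K -> 1 <= a * x -> 1 <= K * x.
Proof.
move=> /andP[a_ge0 aK] ax.
have x_ge0 : 0 <= x.
  rewrite leNgt; apply: contraTN ax => x_lt0; rewrite -ltNge.
  exact: le_lt_trans (mulr_ge0_le0 a_ge0 (ltW x_lt0)) ltr01.
by apply: le_trans ax _; apply: ler_wpM2r aK.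
Qed.

Lemma inv_le_gap (R : realFieldType) (K a b l : R) :
  0 <= a <= K -> 0 <= b <= K -> 1 <= a * (1 - l) -> 1 <= b * (1 + l) ->
  K^-1 <= 1 - `|l|.
Proof.
move=> aK bK /(mulr_ge1_le aK) Kl /(mulr_ge1_le bK) Kl'.
have K_gt0 : 0 < K by case/andP: aK => a_ge0 aK; nra.
rewrite -(ler_pM2l K_gt0) mulfV ?gt_eqF //.
by have [_|_] := ger0P l; rewrite ?opprK.
Qed.

Section SpectralGap.
Variables (R : realFieldType) (n : nat) (e : rel 'I_n) (o : 'I_n).
Hypotheses (e_sym : symmetric e) (e_irr : irreflexive e) (e_conn : connected_graph e).

Definition loop_adj x y : R := (e x y)%:R + ((x == o) && (y == o))%:R * 2.

Local Notation dg x := ((deg_loop e o x)%:R : R).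
Local Notation w := ((n_edges_loop e)%:R : R).

Lemma loop_adj_sym x y : loop_adj x y = loop_adj y x.
Proof. by rewrite /loop_adj e_sym andbC. Qed.

Lemma deg_loopE x : dg x = \sum_y loop_adj x y.
Proof.
rewrite /deg_loop natrD natrM big_split /= -sum1_card natr_sum big_mkcond /=.
congr (_ + _); first by apply: eq_bigr => y _; rewrite inE; case: (e x y).
rewrite (bigD1 o) //= eqxx andbT big1 ?addr0 // => y /negPf ->.
by rewrite andbF mul0r.
Qed.

Lemma deg_loop_gt0 x : 0 < dg x.
Proof.
rewrite ltr0n /deg_loop; have [->|xo] := eqVneq x o; first by rewrite addn2.
rewrite addn0 card_gt0; apply/set0Pn.
have /connectP [[|y p] /= xp ox] := e_conn x o; first by rewrite ox eqxx in xo.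
by exists y; rewrite inE; case/andP: xp.
Qed.

Lemma sum_deg_loop : \sum_x dg x = 2 * w.
Proof.
rewrite -natr_sum /n_edges_loop /deg_loop big_split /=.
have loops : (\sum_x (x == o) * 2 = 2)%N.
  by rewrite (bigD1 o) //= eqxx big1 => [|x /negPf ->].
have edges : (\sum_x #|[set y | e x y]| = 2 * n_tree_edges e)%N.
  rewrite -sum_adj_edges //; apply: eq_bigr => x _.
  by rewrite -sum1_card big_mkcond; apply: eq_bigr => y _; rewrite inE; case: (e x y).
by rewrite loops edges -mulnSr natrM.
Qed.

Lemma sum_loop_adj (G : 'I_n -> 'I_n -> R) :
  \sum_x \sum_y loop_adj x y * G x y = \sum_x \sum_y (e x y)%:R * G x y + 2 * G o o.
Proof.
under eq_bigr do under eq_bigr do rewrite mulrDl.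
under eq_bigr do rewrite big_split /=.
rewrite big_split /=; congr (_ + _).
rewrite (bigD1 o) //= (bigD1 o) //= eqxx mul1r.
rewrite !big1 ?addr0 // => [x /negPf xo | y /negPf ->].
  by apply: big1 => y _; rewrite xo !mul0r.
by rewrite andbF !mul0r.
Qed.

Lemma srw_loop_rowsum x : \sum_y srw_loop R e o x y = 1.
Proof.
under eq_bigr do rewrite mxE.
by rewrite -mulr_suml -deg_loopE mulfV ?gt_eqF ?deg_loop_gt0.
Qed.

Section Eigenvector.
Variables (mu : 'rV[R]_n) (lam : R).
Hypotheses (mu_eigen : mu *m srw_loop R e o = lam *: mu)
  (mu_sum0 : \sum_x mu 0 x = 0) (mu_neq0 : mu != 0).

Local Notation f x := (mu 0 x / dg x).
Local Notation Q := (\sum_x dg x * f x ^+ 2).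

Lemma deg_f x : dg x * f x = mu 0 x.
Proof. by rewrite mulrC divfK ?gt_eqF ?deg_loop_gt0. Qed.

Lemma f_eigen y : \sum_x f x * loop_adj x y = lam * (dg y * f y).
Proof.
have := congr1 (fun v : 'rV_n => v 0 y) mu_eigen; rewrite !mxE deg_f => <-.
by apply: eq_bigr => x _; rewrite mxE mulrA mulrAC.
Qed.

Lemma sqnorm_gt0 : 0 < Q.
Proof.
have /rV0Pn [x mux] := mu_neq0.
rewrite (bigD1 x) //=; apply: ltr_pwDl.
  rewrite mulr_gt0 ?deg_loop_gt0 // exprn_even_gt0 //= mulf_neq0 //.
  by rewrite invr_eq0 gt_eqF ?deg_loop_gt0.
by apply: sumr_ge0 => y _; rewrite mulr_ge0 ?sqr_ge0 ?ltW ?deg_loop_gt0.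
Qed.

Lemma dirichlet_form (c : R) : c ^+ 2 = 1 ->
  \sum_x \sum_y loop_adj x y * (f x + c * f y) ^+ 2 = 2 * (1 + c * lam) * Q.
Proof.
move=> c2.
have sq_l : \sum_x \sum_y loop_adj x y * f x ^+ 2 = Q.
  by apply: eq_bigr => x _; rewrite -mulr_suml deg_loopE.
have sq_r : \sum_x \sum_y loop_adj x y * f y ^+ 2 = Q.
  by rewrite exchange_big; under eq_bigr do under eq_bigr do rewrite loop_adj_sym.
have cross : \sum_x \sum_y loop_adj x y * (f x * f y) = lam * Q.
  rewrite exchange_big mulr_sumr; apply: eq_bigr => y _.
  have -> : lam * (dg y * f y ^+ 2) = lam * (dg y * f y) * f y by rewrite expr2 !mulrA.
  by rewrite -f_eigen mulr_suml; apply: eq_bigr => x _; ring.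
transitivity (\sum_x \sum_y loop_adj x y * f x ^+ 2 +
   (2 * c * \sum_x \sum_y loop_adj x y * (f x * f y) +
    c ^+ 2 * \sum_x \sum_y loop_adj x y * f y ^+ 2)).
  rewrite !mulr_sumr -!big_split; apply: eq_bigr => x _.
  rewrite !mulr_sumr -!big_split; apply: eq_bigr => y _ /=; ring.
by rewrite sq_l sq_r cross c2; ring.
Qed.

Local Notation D := ((diam e)%:R : R).

Lemma path_sum_le_dirichlet (c : R) (G : 'I_n -> 'I_n -> R) x p :
  c ^+ 2 = 1 -> (forall a b, G a b = (f a + c * f b) ^+ 2) ->
  path e x p -> uniq (x :: p) -> path_sum G x p + G o o <= (1 + c * lam) * Q.
Proof.
move=> c2 G_def xp_path xp_uniq.
have G_sym a b : G a b = G b a.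
  rewrite !G_def; have -> : f b + c * f a = c * (f a + c * f b).
    by rewrite mulrDr [c * (c * _)]mulrA -expr2 c2 mul1r addrC.
  by rewrite exprMn c2 mul1r.
have G_ge0 a b : 0 <= G a b by rewrite G_def sqr_ge0.
have := path_sum_le_adj e_sym G_sym G_ge0 xp_path xp_uniq.
have : \sum_x \sum_y loop_adj x y * G x y = 2 * (1 + c * lam) * Q.
  by rewrite -(dirichlet_form c2); do 2![apply: eq_bigr => ? _]; rewrite G_def.
rewrite sum_loop_adj; lra.
Qed.

Lemma sqr_sub_le_sqnorm x : (f x - f o) ^+ 2 <= D * (1 - lam) * Q.
Proof.
have [p [xp_path xp_last xp_uniq p_diam]] := short_uniq_path (e_conn x o).
set G := fun a b => (f a - f b) ^+ 2.
have ps_ge0 : 0 <= path_sum G x p by apply: path_sum_ge0 => *; apply: sqr_ge0.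
have ps_le : path_sum G x p <= (1 - lam) * Q.
  have := path_sum_le_dirichlet (c := -1) (G := G) _ _ xp_path xp_uniq.
  rewrite /G subrr expr0n addr0 mulN1r; apply; first by rewrite sqrrN expr1n.
  by move=> a b; rewrite mulN1r.
have /= := sqr_sub_le_path_sum (fun y => f y) x p; rewrite xp_last => /le_trans; apply.
rewrite -mulrA.
apply: le_trans (ler_wpM2r ps_ge0 (_ : _ <= D)) (ler_wpM2l (ler0n _ _) ps_le).
by rewrite ler_nat.
Qed.

Lemma sqr_le_sqnorm x : f x ^+ 2 <= (D + 4^-1) * (1 + lam) * Q.
Proof.
have [p [xp_path xp_last xp_uniq p_diam]] := short_uniq_path (e_conn x o).
set G := fun a b => (f a + f b) ^+ 2.
have ps_ge0 : 0 <= path_sum G x p + 4 * f o ^+ 2.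
  apply: addr_ge0; last by rewrite mulr_ge0 ?sqr_ge0.
  by apply: path_sum_ge0 => *; apply: sqr_ge0.
have ps_le : path_sum G x p + 4 * f o ^+ 2 <= (1 + lam) * Q.
  have := path_sum_le_dirichlet (c := 1) (G := G) _ _ xp_path xp_uniq.
  (* the loop at [o] supplies the endpoint term of [sqr_le_path_sum] *)
  have -> : 4 * f o ^+ 2 = G o o by rewrite /G; ring.
  rewrite mul1r; apply; first by rewrite expr1n.
  by move=> a b; rewrite mul1r.
have /= := sqr_le_path_sum (fun y => f y) x p; rewrite xp_last => /le_trans; apply.
rewrite -mulrA.
apply: le_trans (ler_wpM2r ps_ge0 (_ : _ <= D + 4^-1)) (ler_wpM2l _ ps_le).
  by rewrite lerD2r ler_nat.
by rewrite addr_ge0 ?invr_ge0.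
Qed.

Lemma weighted_sum_bound (g : 'I_n -> R) B :
  Q <= \sum_x dg x * g x -> (forall x, g x <= B * Q) -> 1 <= 2 * w * B.
Proof.
move=> Q_le g_le; rewrite -(ler_pM2r sqnorm_gt0) mul1r.
apply: le_trans Q_le _; rewrite -sum_deg_loop !mulr_suml; apply: ler_sum => x _.
by rewrite -mulrA ler_pM2l ?deg_loop_gt0 ?g_le.
Qed.

Lemma one_sub_eigen_bound : 1 <= 2 * w * D * (1 - lam).
Proof.
rewrite -mulrA; apply: (@weighted_sum_bound (fun x => (f x - f o) ^+ 2)) => [|x]; last first.
  exact: sqr_sub_le_sqnorm.
have sum_deg_f : \sum_x dg x * f x = 0.
  by rewrite (eq_bigr _ (fun x _ => deg_f x)).
have -> : \sum_x dg x * (f x - f o) ^+ 2 =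
    Q + f o ^+ 2 * \sum_x dg x - 2 * f o * \sum_x dg x * f x.
  by rewrite !mulr_sumr -big_split -sumrB /=; apply: eq_bigr => x _; ring.
by rewrite sum_deg_f mulr0 subr0 lerDl mulr_ge0 ?sqr_ge0 // sum_deg_loop mulr_ge0 ?ler0n.
Qed.

Lemma one_add_eigen_bound : 1 <= 2 * w * (D + 4^-1) * (1 + lam).
Proof.
rewrite -mulrA; apply: (@weighted_sum_bound (fun x => f x ^+ 2)) => // x.
exact: sqr_le_sqnorm.
Qed.

Lemma eigenvalue_gap : ((2 * diam e + 1) * n_edges_loop e)%:R^-1 <= 1 - `|lam|.
Proof.
have w_ge0 : 0 <= w := ler0n _ _.
have D_ge0 : 0 <= D := ler0n _ _.
apply: (inv_le_gap _ _ one_sub_eigen_bound one_add_eigen_bound); rewrite natrM natrD natrM.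
  by apply/andP; split; nra.
have q : 4^-1 <= 2^-1 :> R by rewrite lef_pV2 ?ler_nat ?posrE ?ltr0n.
by apply/andP; split; nra.
Qed.

End Eigenvector.
End SpectralGap.

Lemma char_poly_conj (R : comNzRingType) k (P S A : 'M[R]_k) :
  P *m S = 1%:M -> char_poly (P *m A *m S) = char_poly A.
Proof.
move=> PS; rewrite /char_poly /char_poly_mx.
have PS_poly : map_mx polyC P *m map_mx polyC S = 1%:M by rewrite -map_mxM PS map_mx1.
have -> : 'X%:M - map_mx polyC (P *m A *m S) =
    map_mx polyC P *m ('X%:M - map_mx polyC A) *m map_mx polyC S.
  have PXS : map_mx polyC P *m 'X%:M *m map_mx polyC S = 'X%:M.
    by rewrite scalar_mxC -mulmxA PS_poly mulmx1.
  by rewrite !map_mxM mulmxBr mulmxBl PXS.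
by rewrite !det_mulmx mulrAC -det_mulmx PS_poly det1 mul1r.
Qed.

Section Deflation.
Variables (F : fieldType) (m : nat) (A : 'M[F]_m.+1).
Hypothesis A_rowsum : forall i, \sum_j A i j = 1.

(* Conjugating by [1 + N] turns the column of ones, the right eigenvector of [A]
   for the eigenvalue 1, into the first basis vector. *)
Let N : 'M[F]_m.+1 := \matrix_(i, j) ((j == ord0) && (i != ord0))%:R.
Let deflated := (1%:M - N) *m A *m (1%:M + N).

Let shear_inv : (1%:M - N) *m (1%:M + N) = 1%:M.
Proof.
have N2 : N *m N = 0.
  apply/matrixP => i j; rewrite !mxE big1 // => k _; rewrite !mxE.
  by case: (k == ord0); rewrite ?andbF ?mulr0 ?mul0r.
by rewrite mulmxDr !mulmxBl !mul1mx mulmx1 N2 subr0 subrK.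
Qed.

Let shear_rowsum i : \sum_j (1%:M - N) i j = (i == ord0)%:R.
Proof.
under eq_bigr do rewrite !mxE.
rewrite sumrB (bigD1 i) // eqxx big1 => [|j /negPf]; last by rewrite eq_sym => ->.
rewrite (bigD1 ord0) // eqxx big1 => [|j /negPf -> //].
by case: (i == ord0); rewrite /= !addr0 ?subrr ?subr0.
Qed.

Let deflated_col0 i : deflated i ord0 = (i == ord0)%:R.
Proof.
rewrite mxE (eq_bigr (fun j => ((1%:M - N) *m A) i j)) => [|j _]; last first.
  by rewrite !mxE eqxx /=; case: (j == ord0); rewrite ?addr0 ?add0r mulr1.
under eq_bigr do rewrite mxE.
rewrite exchange_big /= -(shear_rowsum i); apply: eq_bigr => j _.
by rewrite -mulr_sumr A_rowsum mulr1.
Qed.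

Let deflated_minor := row' ord0 (col' ord0 deflated).

Let char_poly_deflated : char_poly A = ('X - 1%:P) * char_poly deflated_minor.
Proof.
rewrite -(char_poly_conj _ shear_inv) -/deflated /char_poly (expand_det_col _ ord0).
rewrite (bigD1 ord0) //= big1 ?addr0 => [|i i0]; last first.
  by rewrite !mxE; have := deflated_col0 i; rewrite mxE => ->; rewrite (negPf i0) subr0 mul0r.
rewrite !mxE; have := deflated_col0 ord0; rewrite mxE => ->.
rewrite eqxx /cofactor row'_col'_char_poly_mx.
by rewrite expr0 mul1r mulr1n.
Qed.

Let root_minor (s : seq F) x : char_poly A = \prod_(y <- s) ('X - y%:P) ->
  x \in rem 1 s -> root (char_poly deflated_minor) x.
Proof.
move=> A_split xs.
have s1 : 1 \in s.
  by rewrite -root_prod_XsubC -A_split char_poly_deflated rootM root_XsubC eqxx.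
suff -> : char_poly deflated_minor = \prod_(y <- rem 1 s) ('X - y%:P).
  by rewrite root_prod_XsubC.
apply: (@mulfI _ ('X - 1%:P)); first by rewrite polyXsubC_eq0.
by rewrite -char_poly_deflated A_split (perm_big _ (perm_to_rem s1)) big_cons.
Qed.

Let lift_minor_eigenvector x (v : 'rV_m) : v != 0 -> v *m deflated_minor = x *: v ->
  exists2 u : 'rV_m.+1, u != 0 & u *m deflated = x *: u /\ u 0 ord0 = 0.
Proof.
move=> v_neq0 v_eigen.
pose u : 'rV_m.+1 := \row_i (if unlift ord0 i is Some k then v 0 k else 0).
have u0 : u 0 ord0 = 0 by rewrite mxE unlift_none.
have u_lift k : u 0 (lift ord0 k) = v 0 k by rewrite mxE liftK.
exists u; last split=> //.
  by apply: contraNneq v_neq0 => u_eq0; apply/eqP/rowP => k; rewrite -u_lift u_eq0 !mxE.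
apply/rowP => j; rewrite !mxE big_ord_recl u0 mul0r add0r.
case: (unliftP ord0 j) => [j'|] ->.
  under eq_bigr do rewrite u_lift.
  have := congr1 (fun r : 'rV_m => r 0 j') v_eigen; rewrite !mxE => <-.
  by apply: eq_bigr => k _; rewrite !mxE.
by rewrite mulr0 big1 // => k _; rewrite deflated_col0 eq_sym (negPf (neq_lift _ _)) mulr0.
Qed.

Lemma left_eigenvector_sum0 (s : seq F) x :
  char_poly A = \prod_(y <- s) ('X - y%:P) -> x \in rem 1 s ->
  exists2 mu : 'rV_m.+1, mu != 0 & mu *m A = x *: mu /\ \sum_i mu 0 i = 0.
Proof.
move=> A_split /(root_minor A_split); rewrite -eigenvalue_root_char.
case/eigenvalueP => v /lift_minor_eigenvector /[apply] -[u u_neq0 [u_eigen u0]].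
exists (u *m (1%:M - N)).
  apply: contraNneq u_neq0 => uN0.
  by rewrite -[u]mulmx1 -shear_inv mulmxA uN0 mul0mx.
split.
  have shear_A : (1%:M - N) *m A = deflated *m (1%:M - N).
    by rewrite /deflated -mulmxA (mulmx1C shear_inv) mulmx1.
  by rewrite -mulmxA shear_A mulmxA u_eigen -scalemxAl.
under eq_bigr do rewrite mxE.
rewrite exchange_big /=; under eq_bigr do rewrite -mulr_sumr shear_rowsum.
by rewrite (bigD1 ord0) //= u0 mul0r add0r big1 // => i /negPf ->; rewrite mulr0.
Qed.

End Deflation.

Theorem mainTheorem7 (R : realFieldType) (n : nat) (e : rel 'I_n) (o : 'I_n)
    (s : seq R) :
  is_tree e ->
  char_poly (srw_loop R e o) = \prod_(x <- s) ('X - x%:P) ->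
  0 < abs_gap s /\
  t_rel s <= ((2 * diam e + 1) * n_edges_loop e)%:R.
Proof.
case: n e o => [|m] e o; first by case: o.
move=> [[e_sym e_irr] e_conn _] A_split.
set K : R := ((2 * diam e + 1) * n_edges_loop e)%:R.
have eigen_gap x : x \in rem 1 s -> K^-1 <= 1 - `|x|.
  move=> xs; have [mu mu_neq0 [mu_eigen mu_sum0]] :=
    left_eigenvector_sum0 (srw_loop_rowsum R o e_conn) A_split xs.
  exact (eigenvalue_gap e_sym e_irr e_conn mu_eigen mu_sum0 mu_neq0).
have K_ge1 : 1 <= K by rewrite ler1n muln_gt0 addn1.
have K_gt0 : 0 < K := lt_le_trans ltr01 K_ge1.
have gap_ge : K^-1 <= abs_gap s.
  have Kinv_le1 : K^-1 <= 1 by rewrite invf_le1.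
  have : \big[Num.max/0]_(x <- rem 1 s) `|x| <= 1 - K^-1.
    rewrite big_seq; apply: bigmax_le => [|x /eigen_gap]; first by rewrite subr_ge0.
    lra.
  rewrite /abs_gap; lra.
have gap_gt0 : 0 < abs_gap s by apply: lt_le_trans gap_ge; rewrite invr_gt0.
by split=> //; rewrite /t_rel -[leRHS]invrK lef_pV2 ?posrE ?invr_gt0.
Qed.
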